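(* For every $n\in\mathbb N$, Thompson's group $F$ acts transitively, via $f\cdot x=\iota(f)(x)$, on the set \[ \Sigma_n=\{(x_1,\ldots,x_n)\in(\{0,1\}^* )^n : x_1 <_{\rm lex} x_2 <_{\rm lex}\cdots<_{\rm lex} x_n\}. \]
   Context: Let $\{0,1\}^*$ be the finite words over $\{0,1\}$ (empty word $\varepsilon$). Order $\{0,1\}^*$ by $\le_{\rm lex}$: for words $x,y$ append the infinite string $\tfrac12\tfrac12\cdots$ to each and compare the results lexicographically with $0<\tfrac12<1$ (so e.g. $00<_{\rm lex}0<_{\rm lex}01$). A finite rooted binary subtree is a finite prefix-closed set of words containing $\varepsilon$ in which each element has both or neither of its children $x0,x1$; its leaves are the elements with no children and its nodes the others. Thompson's group $F$ is the group of homeomorphisms $f$ of $\{0,1\}^{\mathbb N}$ for which there are finite rooted binary subtrees $L,R$ with leaves $\ell_1<_{\rm lex}\cdots<_{\rm lex}\ell_k$ and $r_1<_{\rm lex}\cdots<_{\rm lex}r_k$ such that $f(\ell_i\omega)=r_i\omega$. For such $f$, let $\iota(f)$ be the bijection of $\{0,1\}^*$ sending the $i$-th node of $L$ (in $\le_{\rm lex}$ order) to the $i$-th node of $R$, and sending $\ell_i s\mapsto r_i s$ for all words $s$; this is independent of the choice of $(L,R)$ and defines an action of $F$ on $\{0,1\}^*$. *)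

From mathcomp Require Import all_boot.
Set Implicit Arguments. Unset Strict Implicit. Unset Printing Implicit Defensive.

(* Finite words over {0,1}: false = 0, true = 1. *)
Definition word := seq bool.

(* Strict lexicographic order <_lex: compare x.(1/2)(1/2)... with
   y.(1/2)(1/2)... lexicographically, where 0 < 1/2 < 1. *)
Fixpoint lexlt (x y : word) : bool :=
  match x, y with
  | [::], [::] => false
  | [::], b :: _ => b            (* 1/2 < b  iff b = 1 *)
  | a :: _, [::] => ~~ a         (* a < 1/2  iff a = 0 *)
  | a :: x', b :: y' => if a == b then lexlt x' y' else (~~ a) && b
  end.

Definition lexle (x y : word) : bool := (x == y) || lexlt x y.

Definition is_tree (T : seq word) : Prop :=
  [/\ uniq T,
      [::] \in T,
      (forall x p, x \in T -> prefix p x -> p \in T)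
    & (forall x, x \in T -> (rcons x false \in T) = (rcons x true \in T))].

Definition leaves (T : seq word) : seq word :=
  sort lexle [seq x <- T | rcons x false \notin T].
Definition nodes (T : seq word) : seq word :=
  sort lexle [seq x <- T | rcons x false \in T].

(* A pair (L,R) of finite rooted binary subtrees with the same number of
   leaves; such pairs are exactly the representatives of elements of F. *)
Definition thompson_pair (L R : seq word) : Prop :=
  [/\ is_tree L, is_tree R & size (leaves L) = size (leaves R)].

(* iota(f) for f represented by (L,R): i-th node of L |-> i-th node of R,
   and l_i s |-> r_i s. (Every word is either a node of L or extends a
   unique leaf of L; the last fallback branch is never used for trees.) *)
Definition iota (L R : seq word) (w : word) : word :=
  if w \in nodes L then nth [::] (nodes R) (index w (nodes L))
  else match [seq l <- leaves L | prefix l w] with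
       | l :: _ => nth [::] (leaves R) (index l (leaves L)) ++ drop (size l) w
       | [::] => w
       end.

Definition in_Sigma (n : nat) (x : n.-tuple word) : bool := sorted lexlt x.

Definition act_tuple (L R : seq word) (n : nat) (x : n.-tuple word) : seq word :=
  map (iota L R) x.

(* A finite rooted binary tree with leaves l_0 <_lex ... <_lex l_k and nodes
   v_0 <_lex ... <_lex v_(k-1) cuts {0,1}^* into the consecutive <_lex-intervals
   l_0{0,1}^* < v_0 < l_1{0,1}^* < v_1 < ... < l_k{0,1}^*, and iota(L,R) maps each
   interval of L onto the corresponding interval of R increasingly, so it is
   increasing.  For transitivity, splitting an increasing tuple by first letter
   shows by induction on word length that its words can be made nodes of one tree,
   with arbitrary numbers (beyond some bound) of further nodes before, between
   and after them.  Choosing the same numbers for x and y yields trees L and R in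
   which x_i and y_i are nodes of the same rank, so iota(L,R) maps x to y. *)

From Pilot Require Import Defs.
From mathcomp Require Import all_boot zify.
Set Implicit Arguments. Unset Strict Implicit. Unset Printing Implicit Defensive.

(* [lia] would treat [@size word s] and [@size (seq bool) s] as distinct atoms. *)
Ltac lia_word := unfold word in *; lia.

Lemma lexlt_irr x : lexlt x x = false.
Proof. by elim: x => //= a x ->; case: a. Qed.

Lemma lexlt_trans : transitive lexlt.
Proof.
move=> y x z; elim: x y z => [|a x IH] [|b y] [|c z] //=;
  (try case: a); (try case: b); (try case: c); rewrite //=; eauto.
Qed.

Lemma lexlt_asym x y : lexlt x y -> lexlt y x -> False.
Proof. by move=> h1 h2; move: (lexlt_trans h1 h2); rewrite lexlt_irr. Qed.

Lemma lexlt_total x y : x != y -> lexlt x y || lexlt y x.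
Proof.
elim: x y => [|a x IH] [|b y] //=; first by case: b.
  by case: a.
by case: a; case: b => //= h; apply: IH; apply: contra h => /eqP ->.
Qed.

Lemma lexlt_sorted_uniq s : sorted lexlt s -> uniq s.
Proof. by apply: sorted_uniq; [exact: lexlt_trans | move=> x; rewrite lexlt_irr]. Qed.

Lemma lexle_trans : transitive lexle.
Proof.
move=> y x z; rewrite /lexle => /orP[/eqP->//|h1] /orP[/eqP<-|h2].
  by rewrite h1 orbT.
by rewrite (lexlt_trans h1 h2) orbT.
Qed.

Lemma lexle_anti : antisymmetric lexle.
Proof.
move=> x y; rewrite /lexle => /andP[/orP[/eqP//|h1] /orP[/eqP//|h2]].
by case: (lexlt_asym h1 h2).
Qed.

Lemma lexle_total : total lexle.
Proof.
move=> x y; rewrite /lexle; case: (eqVneq x y) => [->|/lexlt_total]; first by [].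
by case/orP=> ->; rewrite ?orbT.
Qed.

Lemma sort_lexle_sorted (s1 s2 : seq word) : uniq s1 -> sorted lexlt s2 -> s1 =i s2 ->
  sort lexle s1 = s2.
Proof.
move=> u1 s2s e; apply: (sorted_eq lexle_trans lexle_anti).
- exact: sort_sorted lexle_total _.
- by apply: sub_sorted s2s => x y h; rewrite /lexle h orbT.
by rewrite perm_sort; apply: uniq_perm => //; apply: lexlt_sorted_uniq.
Qed.

Inductive btree := Leaf | Node of btree & btree.

Fixpoint bt_leaves (t : btree) : seq word :=
  match t with
  | Leaf => [:: [::]]
  | Node l r => map (cons false) (bt_leaves l) ++ map (cons true) (bt_leaves r)
  end.

Fixpoint bt_nodes (t : btree) : seq word :=
  match t with
  | Leaf => [::]
  | Node l r => map (cons false) (bt_nodes l) ++ [::] :: map (cons true) (bt_nodes r)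
  end.

Definition nleaves t := size (bt_leaves t).

Lemma nleaves_gt0 t : 0 < nleaves t.
Proof.
by elim: t => //= l IHl r _; rewrite /nleaves size_cat size_map addn_gt0 IHl.
Qed.

Lemma size_bt_nodes t : size (bt_nodes t) = (nleaves t).-1.
Proof.
elim: t => //= l IHl r IHr; rewrite /nleaves /= !size_cat /= !size_map IHl IHr.
by have := nleaves_gt0 l; have := nleaves_gt0 r; rewrite /nleaves; lia_word.
Qed.

Lemma nleaves_nodes t : nleaves t = (size (bt_nodes t)).+1.
Proof. by rewrite size_bt_nodes; have := nleaves_gt0 t; lia_word. Qed.

(* [(j, Some s)] stands for the word [l_j s], where [l_j] is the [j]-th leaf, and
   [(j, None)] for the [j]-th node, which lies between the cones of [l_j] and
   [l_(j+1)]. *)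
Definition loc := (nat * option word)%type.

Fixpoint locate (t : btree) (w : word) : loc :=
  match t, w with
  | Leaf, _ => (0, Some w)
  | Node l r, [::] => ((nleaves l).-1, None)
  | Node l r, false :: w' => locate l w'
  | Node l r, true :: w' => let: (j, a) := locate r w' in (nleaves l + j, a)
  end.

Definition unlocate (t : btree) (k : loc) : word :=
  match k.2 with
  | None => nth [::] (bt_nodes t) k.1
  | Some s => nth [::] (bt_leaves t) k.1 ++ s
  end.

Definition loc_valid (t : btree) (k : loc) : bool :=
  if k.2 is Some _ then k.1 < nleaves t else k.1.+1 < nleaves t.

Definition opt_lt (a b : option word) : bool :=
  match a, b with
  | Some s, Some s' => lexlt s s'
  | Some _, None => true
  | _, _ => false
  end.

Definition loc_lt (k1 k2 : loc) : bool :=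
  (k1.1 < k2.1) || ((k1.1 == k2.1) && opt_lt k1.2 k2.2).

Lemma loc_lt_irr k : loc_lt k k = false.
Proof. by case: k => j [s|]; rewrite /loc_lt /= ltnn eqxx //= lexlt_irr. Qed.

Lemma loc_lt_asym k1 k2 : loc_lt k1 k2 -> loc_lt k2 k1 -> False.
Proof.
case: k1 k2 => j1 [s1|] [j2 [s2|]]; rewrite /loc_lt /=;
  case: (ltngtP j1 j2) => //= _ //; exact: lexlt_asym.
Qed.

Lemma nth_bt_leaves_Node l r j : j < nleaves l + nleaves r ->
  nth [::] (bt_leaves (Node l r)) j =
  if j < nleaves l then false :: nth [::] (bt_leaves l) j
  else true :: nth [::] (bt_leaves r) (j - nleaves l).
Proof.
move=> hj; rewrite /= nth_cat size_map -/(nleaves l); case: ifP => h.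
  by rewrite (nth_map [::]).
by rewrite (nth_map [::]) //; rewrite /nleaves in h hj *; lia_word.
Qed.

Lemma locate_valid t w : loc_valid t (locate t w).
Proof.
elim: t w => [|l IHl r IHr] w /=; first by rewrite /loc_valid /nleaves.
have := nleaves_gt0 l; have := nleaves_gt0 r.
case: w => [|[] w] /=; rewrite /loc_valid /nleaves /= size_cat !size_map -/(nleaves l) -/(nleaves r).
- by lia_word.
- by have := IHr w; case: (locate r w) => j [s|]; rewrite /loc_valid /=; lia_word.
- by have := IHl w; case: (locate l w) => j [s|]; rewrite /loc_valid /=; lia_word.
Qed.

Lemma locate_mono t w1 w2 : lexlt w1 w2 -> loc_lt (locate t w1) (locate t w2).
Proof.
elim: t w1 w2 => [|l IHl r IHr] w1 w2 /=; first by move=> h; rewrite /loc_lt /= h.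
have gl := nleaves_gt0 l.
case: w1 => [|[] w1]; case: w2 => [|[] w2] //= h.
- by case: (locate r w2) => j a; rewrite /loc_lt /=; apply/orP; left; lia_word.
- have := IHr _ _ h; case: (locate r w1) => j1 a1; case: (locate r w2) => j2 a2.
  by rewrite /loc_lt /= ltn_add2l eqn_add2l.
- have := locate_valid l w1; case: (locate l w1) => j1 [s1|]; rewrite /loc_valid /loc_lt /=.
    by move=> hv; case: (ltngtP j1 (nleaves l).-1) => //; lia_word.
  by move=> hv; apply/orP; left; lia_word.
- have := locate_valid l w1; case: (locate l w1) => j1 a1; case: (locate r w2) => j2 a2.
  by rewrite /loc_lt /= => hv; apply/orP; left; case: a1 hv; rewrite /loc_valid /=; lia_word.
- exact: IHl.
Qed.

Lemma locateK t : cancel (locate t) (unlocate t).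
Proof.
elim: t => [|l IHl r IHr] w; first by rewrite /unlocate.
have gl := nleaves_gt0 l.
case: w => [|[] w] /=.
- by rewrite /unlocate /= nth_cat size_map size_bt_nodes ltnn subnn.
- have := IHr w; have := locate_valid r w.
  case: (locate r w) => j [s|]; rewrite /unlocate /loc_valid /= => hv <-.
    by rewrite nth_bt_leaves_Node ?ltnNge ?leq_addr /= ?addKn // -ltnNge ltn_add2l.
  rewrite nth_cat size_map size_bt_nodes ifF; last by lia_word.
  have -> : nleaves l + j - (nleaves l).-1 = j.+1 by lia_word.
  by rewrite /= (nth_map [::]) // size_bt_nodes; lia_word.
- have := IHl w; have := locate_valid l w.
  case: (locate l w) => j [s|]; rewrite /unlocate /loc_valid /= => hv <-.
    by rewrite nth_bt_leaves_Node ?hv //; apply: leq_trans (leq_addr _ _).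
  rewrite nth_cat size_map size_bt_nodes ifT; last by lia_word.
  by rewrite (nth_map [::]) // size_bt_nodes; lia_word.
Qed.

Lemma unlocateK t k : loc_valid t k -> locate t (unlocate t k) = k.
Proof.
elim: t k => [|l IHl r IHr] [j [s|]]; rewrite /loc_valid /unlocate /=.
- by rewrite /nleaves /= ltnS leqn0 => /eqP ->.
- by rewrite /nleaves.
- rewrite /nleaves /= size_cat !size_map -/(nleaves l) -/(nleaves r) => h.
  rewrite nth_bt_leaves_Node //; case: ifP => hj /=.
    by have := IHl (j, Some s); rewrite /loc_valid /unlocate /= => ->.
  have := IHr (j - nleaves l, Some s); rewrite /loc_valid /unlocate /= => ->; last by lia_word.
  by congr pair; lia_word.
- rewrite /nleaves /= size_cat !size_map -/(nleaves l) -/(nleaves r) => h.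
  have gl := nleaves_gt0 l; have sl := size_bt_nodes l.
  rewrite nth_cat size_map sl; case: ltnP => h1.
    rewrite (nth_map [::]) ?sl //=.
    by have := IHl (j, None); rewrite /loc_valid /unlocate /= => ->; last by lia_word.
  case: (eqVneq j (nleaves l).-1) => [->|hne]; first by rewrite subnn.
  have -> : j - (nleaves l).-1 = (j - nleaves l).+1 by lia_word.
  rewrite /= (nth_map [::]); last by rewrite size_bt_nodes; lia_word.
  have := IHr (j - nleaves l, None); rewrite /loc_valid /unlocate /= => ->; last by lia_word.
  by congr pair; lia_word.
Qed.

Lemma unlocate_mono t k1 k2 : loc_valid t k1 -> loc_valid t k2 -> loc_lt k1 k2 ->
  lexlt (unlocate t k1) (unlocate t k2).
Proof.
move=> v1 v2 h.
case: (eqVneq (unlocate t k1) (unlocate t k2)) => [e|/lexlt_total/orP[//|h']].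
  by move: h; rewrite -(unlocateK v1) -(unlocateK v2) e loc_lt_irr.
by case: (loc_lt_asym h); rewrite -(unlocateK v1) -(unlocateK v2); apply: locate_mono.
Qed.

Lemma sorted_bt_leaves t : sorted lexlt (bt_leaves t).
Proof.
rewrite sorted_pairwise; last exact: lexlt_trans.
apply/(pairwiseP [::]) => i j hi hj hij.
have := @unlocate_mono t (i, Some [::]) (j, Some [::]).
by rewrite /unlocate /loc_valid /= !cats0 /loc_lt /= hij; apply.
Qed.

Lemma sorted_bt_nodes t : sorted lexlt (bt_nodes t).
Proof.
rewrite sorted_pairwise; last exact: lexlt_trans.
apply/(pairwiseP [::]) => i j hi hj hij.
have := @unlocate_mono t (i, None) (j, None).
move: hi hj; rewrite /unlocate /loc_valid /= /loc_lt /= hij !inE size_bt_nodes.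
by move=> hi hj; apply; lia_word.
Qed.

Fixpoint bt_mem (t : btree) (w : word) : bool :=
  match t, w with
  | Leaf, w => w == [::]
  | Node _ _, [::] => true
  | Node l _, false :: w' => bt_mem l w'
  | Node _ r, true :: w' => bt_mem r w'
  end.

Fixpoint bt_words (t : btree) : seq word :=
  match t with
  | Leaf => [:: [::]]
  | Node l r => [::] :: (map (cons false) (bt_words l) ++ map (cons true) (bt_words r))
  end.

Lemma mem_map_cons (b c : bool) (x : word) (s : seq word) :
  (b :: x \in map (cons c) s) = (b == c) && (x \in s).
Proof.
apply/mapP/andP => [[y ys [-> ->]]|[/eqP -> xs]]; last by exists x.
by split.
Qed.

Lemma nil_map_cons (c : bool) (s : seq word) : ([::] \in map (cons c) s) = false.
Proof. by apply/mapP => -[]. Qed.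

Lemma mem_bt_words t w : (w \in bt_words t) = bt_mem t w.
Proof.
elim: t w => [|l IHl r IHr] w /=; first by rewrite inE.
case: w => [|b w]; first by rewrite inE eqxx.
by rewrite inE /= mem_cat !mem_map_cons IHl IHr; case: b; rewrite /= ?orbF.
Qed.

Lemma uniq_bt_words t : uniq (bt_words t).
Proof.
elim: t => //= l IHl r IHr.
rewrite mem_cat !nil_map_cons /= cat_uniq !map_inj_uniq //; try by move=> ? ? [].
rewrite IHl IHr /= andbT; apply/hasPn => x /mapP [y _ ->].
by rewrite mem_map_cons.
Qed.

Lemma mem_bt_leaves t x : (x \in bt_leaves t) = bt_mem t x && ~~ bt_mem t (rcons x false).
Proof.
elim: t x => [|l IHl r IHr] x /=; first by rewrite inE; case: x.
case: x => [|b x]; first by rewrite mem_cat !nil_map_cons; case: l {IHl}.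
by rewrite mem_cat !mem_map_cons IHl IHr; case: b; rewrite /= ?orbF.
Qed.

Lemma mem_bt_nodes t x : (x \in bt_nodes t) = bt_mem t x && bt_mem t (rcons x false).
Proof.
elim: t x => [|l IHl r IHr] x /=; first by rewrite in_nil; case: x.
case: x => [|b x]; first by rewrite mem_cat inE eqxx orbT; case: l {IHl}.
by rewrite mem_cat inE /= !mem_map_cons IHl IHr; case: b; rewrite /= ?orbF.
Qed.

Lemma is_tree_bt_words t : is_tree (bt_words t).
Proof.
have mem_nil u : bt_mem u [::] by case: u.
split; first exact: uniq_bt_words.
- by rewrite mem_bt_words.
- move=> x p; rewrite !mem_bt_words.
  elim: t x p {mem_nil} => [|l IHl r IHr] x p /=; first by move=> /eqP ->; case: p.
  case: p => [|c p] //; case: x => [|b x] //= hx /andP[/eqP -> hpx].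
  by case: b hx => hx; [apply: IHr hx hpx | apply: IHl hx hpx].
- move=> x _; rewrite !mem_bt_words.
  elim: t x => [|l IHl r IHr] x /=; first by case: x.
  by case: x => [|[] x] /=; rewrite ?mem_nil.
Qed.

Definition subtree (b : bool) (T : seq word) : seq word :=
  [seq behead x | x <- T & ohead x == Some b].

Lemma mem_subtree b T w : (w \in subtree b T) = (b :: w \in T).
Proof.
apply/mapP/idP => [[x hx ->]|h]; last by exists (b :: w); rewrite // mem_filter /= eqxx.
by move: hx; rewrite mem_filter; case: x => [|c x] //= /andP[/eqP[->] h].
Qed.

Lemma size_subtree b T : [::] \in T -> size (subtree b T) < size T.
Proof.
move=> h0; rewrite size_map size_filter -(count_predC [pred x | ohead x == Some b] T).
rewrite -[X in X < _]addn0 ltn_add2l -has_count.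
by apply/hasP; exists [::].
Qed.

Lemma btree_of_closed (T : seq word) : [::] \in T ->
  (forall x p, x \in T -> prefix p x -> p \in T) ->
  (forall x, x \in T -> (rcons x false \in T) = (rcons x true \in T)) ->
  exists t, forall w, (w \in T) = bt_mem t w.
Proof.
have [k] := ubnP (size T); elim: k T => // k IH T hT h0 hp hc.
case: (boolP ([:: false] \in T)) => hf.
- have ht : [:: true] \in T by rewrite -(hc [::] h0).
  have hsub b : [:: b] \in T -> exists t, forall w, (w \in subtree b T) = bt_mem t w.
    move=> hb; apply: IH; rewrite ?mem_subtree //.
    - exact: leq_trans (size_subtree b h0) hT.
    - by move=> x p; rewrite !mem_subtree => hx hpx; apply: hp hx _; rewrite /= eqxx.
    - by move=> x; rewrite !mem_subtree => hx; rewrite -!rcons_cons hc.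
  have [[tl htl] [tr htr]] := (hsub false hf, hsub true ht).
  exists (Node tl tr) => -[|b w] //=; rewrite ?h0 //.
  by case: b; rewrite -?htl -?htr mem_subtree.
- exists Leaf => -[|b w] //=; rewrite ?h0 //; apply/negP => hw.
  have hb : [:: b] \in T by apply: hp hw _; rewrite /= eqxx prefix0s.
  have := hc [::] h0; rewrite /= (negbTE hf).
  by case: b hb {hw} => hb; [rewrite hb | rewrite hb in hf].
Qed.

Lemma btree_of_tree (T : seq word) : is_tree T -> exists t, forall w, (w \in T) = bt_mem t w.
Proof. by case=> _; apply: btree_of_closed. Qed.

Section TreeRepresentation.

Variables (T : seq word) (t : btree).
Hypotheses (uniqT : uniq T) (memT : forall w, (w \in T) = bt_mem t w).

Lemma leaves_btree : leaves T = bt_leaves t.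
Proof.
apply: sort_lexle_sorted; rewrite ?filter_uniq ?sorted_bt_leaves // => x.
by rewrite mem_filter mem_bt_leaves !memT andbC.
Qed.

Lemma nodes_btree : nodes T = bt_nodes t.
Proof.
apply: sort_lexle_sorted; rewrite ?filter_uniq ?sorted_bt_nodes // => x.
by rewrite mem_filter mem_bt_nodes !memT andbC.
Qed.

End TreeRepresentation.

Lemma filter_prefix_map_cons (b c : bool) (w : word) (s : seq word) :
  [seq x <- map (cons c) s | prefix x (b :: w)] =
  if b == c then map (cons c) [seq x <- s | prefix x w] else [::].
Proof.
elim: s => [|x s IH] /=; first by case: ifP.
by rewrite IH; move: IH; case: b; case: c => //= _; case: (prefix x w).
Qed.

Lemma filter_prefix_bt_leaves t w j s : locate t w = (j, Some s) ->
  [seq l <- bt_leaves t | prefix l w] = [:: nth [::] (bt_leaves t) j].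
Proof.
elim: t w j s => [|l IHl r IHr] w j s /=; first by case=> <- _; rewrite prefix0s.
case: w => [|[] w] //=; rewrite filter_cat !filter_prefix_map_cons /=.
- case e: (locate r w) => [j' a] [<- ea]; subst a.
  have := locate_valid r w; rewrite e /loc_valid /= => hv.
  rewrite nth_bt_leaves_Node ?ltnNge ?leq_addr /= ?addKn ?(IHr _ _ _ e) //.
  by rewrite -ltnNge ltn_add2l.
- move=> e; have := locate_valid l w; rewrite e /loc_valid /= => hv.
  by rewrite nth_bt_leaves_Node ?hv ?(IHl _ _ _ e) ?cats0 //; apply: leq_trans (leq_addr _ _).
Qed.

Lemma iota_btree (L R : seq word) tL tR : uniq L -> uniq R ->
    (forall w, (w \in L) = bt_mem tL w) -> (forall w, (w \in R) = bt_mem tR w) ->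
  Defs.iota L R =1 unlocate tR \o locate tL.
Proof.
move=> uL uR memL memR w; rewrite /Defs.iota (leaves_btree uL memL) (leaves_btree uR memR).
rewrite (nodes_btree uL memL) (nodes_btree uR memR) /=.
have uniq_nodes := lexlt_sorted_uniq (sorted_bt_nodes tL).
have hv := locate_valid tL w; have hw := locateK tL w.
case e: (locate tL w) hv hw => [j [s|]]; rewrite /loc_valid /unlocate /= => hv hw.
  have -> : (w \in bt_nodes tL) = false.
    apply/negP => w_node; have := @unlocateK tL (index w (bt_nodes tL), None).
    by rewrite /unlocate /loc_valid /= nth_index // e nleaves_nodes ltnS index_mem w_node => /(_ isT).
  rewrite (filter_prefix_bt_leaves e) index_uniq ?(lexlt_sorted_uniq (sorted_bt_leaves _)) //.
  by rewrite -hw drop_size_cat.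
by rewrite -hw mem_nth ?index_uniq // size_bt_nodes; lia_word.
Qed.

Lemma iota_lexlt_mono (L R : seq word) : thompson_pair L R ->
  {homo Defs.iota L R : w1 w2 / lexlt w1 w2}.
Proof.
case=> treeL treeR; have [[uL _ _ _] [uR _ _ _]] := (treeL, treeR).
have [[tL memL] [tR memR]] := (btree_of_tree treeL, btree_of_tree treeR).
rewrite (leaves_btree uL memL) (leaves_btree uR memR) => same_nleaves w1 w2 lt_w12.
rewrite !(iota_btree uL uR memL memR) /=.
have validR w : loc_valid tR (locate tL w).
  by have := locate_valid tL w; rewrite /loc_valid /nleaves same_nleaves.
by apply: unlocate_mono; rewrite ?validR //; apply: locate_mono.
Qed.

Lemma sorted_split_first_letter (xs : seq word) : sorted lexlt xs ->
  exists xs0 xs1 (m : bool), xs = map (cons false) xs0 ++ nseq m [::] ++ map (cons true) xs1.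
Proof.
elim: xs => [|x xs IH] sorted_xs; first by exists [::], [::], false.
have hall : all (lexlt x) xs by apply: order_path_min sorted_xs; exact: lexlt_trans.
have [xs0 [xs1 [m e]]] := IH (path_sorted sorted_xs).
case: x {sorted_xs IH} hall => [|[] x'] hall; last by exists (x' :: xs0), xs1, m; rewrite e.
all: have : all (lexlt [::]) xs by apply: sub_all hall => y //; exact: lexlt_trans.
all: rewrite e !all_cat all_map => /and3P[all0 allm _].
all: have -> : xs0 = [::] by case: xs0 {e} all0.
all: have -> : m = false by case: m {e} allm.
- by exists [::], xs1, true.
- by exists [::], (x' :: xs1), false.
Qed.

Lemma sorted_split_parts xs0 xs1 (m : bool) :
  sorted lexlt (map (cons false) xs0 ++ nseq m [::] ++ map (cons true) xs1) ->
  sorted lexlt xs0 /\ sorted lexlt xs1.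
Proof.
move=> /cat_sorted2 [s0 /cat_sorted2 [_ s1]].
by rewrite !sorted_map in s0 s1; split; [apply: sub_sorted s0 | apply: sub_sorted s1].
Qed.

(* With [gs = [:: g_0; ...; g_n]] unselected nodes before, between and after [n]
   selected ones, the [i]-th selected node has index [g_0 + ... + g_i + i]. *)
Definition gap_index (gs : seq nat) i := sumn (take i.+1 gs) + i.

Lemma gap_index_catl gs gs' i : i < size gs -> gap_index (gs ++ gs') i = gap_index gs i.
Proof. by move=> h; rewrite /gap_index takel_cat. Qed.

Lemma gap_index_catr gs gs' j :
  gap_index (gs ++ gs') (size gs + j) = sumn gs + size gs + gap_index gs' j.
Proof.
rewrite /gap_index take_cat ltnNge (_ : size gs <= (size gs + j).+1) /=; last by lia_word.
by rewrite (_ : (size gs + j).+1 - size gs = j.+1) ?sumn_cat; lia_word.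
Qed.

Lemma gap_index_cons g gs j : gap_index (g :: gs) j = g + sumn (take j gs) + j.
Proof. by []. Qed.

Fixpoint comb n := if n is n'.+1 then Node Leaf (comb n') else Leaf.

Lemma size_bt_nodes_comb n : size (bt_nodes (comb n)) = n.
Proof. by elim: n => //= n IH; rewrite size_map IH. Qed.

(* Any gaps [gs] that are all at least [B] can be realised around [xs] in some tree. *)
Definition placeable (xs : seq word) (B : nat) :=
  forall gs, size gs = (size xs).+1 -> all (leq B) gs ->
  exists t, size (bt_nodes t) = sumn gs + size xs /\
    forall i, i < size xs -> locate t (nth [::] xs i) = (gap_index gs i, None).

Lemma placeable_nil : placeable [::] 0.
Proof.
move=> [|g [|g' gs]] //= _ _; exists (comb g).
by rewrite size_bt_nodes_comb !addn0.
Qed.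

Lemma placeable_Node_root xs0 xs1 B0 B1 : placeable xs0 B0 -> placeable xs1 B1 ->
  placeable (map (cons false) xs0 ++ [::] :: map (cons true) xs1) (maxn B0 B1).
Proof.
move=> p0 p1 gs; rewrite size_cat /= !size_map => size_gs ge_gs.
set gs0 := take (size xs0).+1 gs; set gs1 := drop (size xs0).+1 gs.
have egs : gs = gs0 ++ gs1 by rewrite cat_take_drop.
have size_gs0 : size gs0 = (size xs0).+1 by rewrite size_take size_gs; case: ifP; lia_word.
have size_gs1 : size gs1 = (size xs1).+1 by rewrite size_drop size_gs; lia_word.
have /andP[ge_gs0 _] : all (leq B0) gs0 && all (leq B0) gs1.
  by rewrite -all_cat -egs; apply: sub_all ge_gs => g; apply: leq_trans; rewrite leq_maxl.
have /andP[_ ge_gs1] : all (leq B1) gs0 && all (leq B1) gs1.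
  by rewrite -all_cat -egs; apply: sub_all ge_gs => g; apply: leq_trans; rewrite leq_maxr.
have [tl [nodes_l loc_l]] := p0 gs0 size_gs0 ge_gs0.
have [tr [nodes_r loc_r]] := p1 gs1 size_gs1 ge_gs1.
exists (Node tl tr); split.
  by rewrite /= size_cat /= !size_map nodes_l nodes_r egs sumn_cat; lia_word.
move=> i hi; rewrite nth_cat size_map; case: ltnP => hi0.
  by rewrite (nth_map [::]) //= loc_l // egs gap_index_catl // size_gs0; lia_word.
case: (eqVneq i (size xs0)) => [->|ne].
  by rewrite subnn /= -size_bt_nodes /gap_index -/gs0 nodes_l; congr pair; lia_word.
have -> : i - size xs0 = (i - (size xs0).+1).+1 by lia_word.
rewrite /= (nth_map [::]); last by lia_word.
rewrite /= loc_r; last by lia_word.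
rewrite egs (_ : i = size gs0 + (i - (size xs0).+1)); last by lia_word.
by rewrite gap_index_catr nleaves_nodes nodes_l size_gs0 addKn; congr pair; lia_word.
Qed.

Lemma placeable_Node xs0 xs1 B0 B1 : placeable xs0 B0 -> placeable xs1 B1 ->
  placeable (map (cons false) xs0 ++ map (cons true) xs1) (B0 + B1 + 1).
Proof.
move=> p0 p1 gs; rewrite size_cat !size_map => size_gs ge_gs.
set gs0 := take (size xs0) gs; set g := nth 0 gs (size xs0); set gs1 := drop (size xs0).+1 gs.
have egs : gs = gs0 ++ g :: gs1 by rewrite /g -drop_nth ?cat_take_drop // size_gs; lia_word.
have size_gs0 : size gs0 = size xs0 by rewrite size_take size_gs; case: ifP; lia_word.
have size_gs1 : size gs1 = size xs1 by rewrite size_drop size_gs; lia_word.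
move: ge_gs; rewrite egs all_cat /= => /and3P[ge_gs0 ge_g ge_gs1].
(* The gap [g] around the unselected root is split as [B0 + 1 + (g - B0 - 1)]. *)
have size_gs0' : size (rcons gs0 B0) = (size xs0).+1 by rewrite size_rcons size_gs0.
have ge_gs0' : all (leq B0) (rcons gs0 B0).
  by rewrite all_rcons leqnn; apply: sub_all ge_gs0 => x; apply: leq_trans; lia_word.
have size_gs1' : size ((g - B0 - 1) :: gs1) = (size xs1).+1 by rewrite /= size_gs1.
have ge_gs1' : all (leq B1) ((g - B0 - 1) :: gs1).
  by rewrite /= (_ : B1 <= g - B0 - 1) ?(sub_all _ ge_gs1) // => [x|]; [apply: leq_trans|]; lia_word.
have [tl [nodes_l loc_l]] := p0 _ size_gs0' ge_gs0'.
have [tr [nodes_r loc_r]] := p1 _ size_gs1' ge_gs1'.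
exists (Node tl tr); split.
  rewrite /= size_cat /= !size_map nodes_l nodes_r -cats1 !sumn_cat /=.
  by move: ge_g; lia_word.
move=> i hi; rewrite nth_cat size_map; case: ltnP => hi0.
  by rewrite (nth_map [::]) //= loc_l // -cats1 !gap_index_catl ?size_gs0.
rewrite /= (nth_map [::]); last by lia_word.
rewrite /= loc_r; last by lia_word.
rewrite (_ : i = size gs0 + (i - size xs0)); last by lia_word.
rewrite gap_index_catr !gap_index_cons nleaves_nodes nodes_l size_gs0 -cats1 sumn_cat /= addKn.
by congr pair; move: ge_g; lia_word.
Qed.

Lemma placeable_sorted xs : sorted lexlt xs -> exists B, placeable xs B.
Proof.
have [k] := ubnP (\max_(w <- xs) size w).
have bound_all m : \max_(w <- xs) size w < m -> all (fun w => size w < m) xs.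
  by move=> hm; apply/allP => w wx; apply: leq_ltn_trans (leq_bigmax_seq _ wx isT) hm.
move=> /bound_all {bound_all}; elim: k xs => [|k IH] xs bounded sorted_xs.
  by case: xs {sorted_xs} bounded => // _; exists 0; exact: placeable_nil.
have [xs0 [xs1 [m e]]] := sorted_split_first_letter sorted_xs.
rewrite e in bounded sorted_xs *; have [s0 s1] := sorted_split_parts sorted_xs.
move: bounded; rewrite !all_cat !all_map => /and3P[b0 _ b1].
have [[B0 p0] [B1 p1]] := (IH xs0 b0 s0, IH xs1 b1 s1).
case: m {e sorted_xs} => /=.
  by exists (maxn B0 B1); apply: placeable_Node_root.
by exists (B0 + B1 + 1); apply: placeable_Node.
Qed.

Lemma act_tuple_transitive n (x y : n.-tuple word) : sorted lexlt x -> sorted lexlt y ->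
  exists L R, thompson_pair L R /\ act_tuple L R x = y.
Proof.
move=> sorted_x sorted_y.
have [[Bx px] [By py]] := (placeable_sorted sorted_x, placeable_sorted sorted_y).
pose gs := nseq n.+1 (maxn Bx By).
have size_gs (z : n.-tuple word) : size gs = (size z).+1 by rewrite size_nseq size_tuple.
have ge_gs B : B <= maxn Bx By -> all (leq B) gs by rewrite all_nseq => ->; rewrite orbT.
have [tL [nodesL locL]] := px gs (size_gs x) (ge_gs _ (leq_maxl _ _)).
have [tR [nodesR locR]] := py gs (size_gs y) (ge_gs _ (leq_maxr _ _)).
exists (bt_words tL), (bt_words tR); split.
  split; try exact: is_tree_bt_words.
  rewrite !(leaves_btree (uniq_bt_words _) (mem_bt_words _)).
  by rewrite -!/(nleaves _) !nleaves_nodes nodesL nodesR !size_tuple.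
apply: (@eq_from_nth _ [::]) => [|i]; rewrite size_map ?size_tuple // => lt_in.
rewrite (nth_map [::]) ?size_tuple //.
rewrite (iota_btree (uniq_bt_words _) (uniq_bt_words _) (mem_bt_words _) (mem_bt_words _)) /=.
by rewrite locL ?size_tuple // -(locR i) ?size_tuple // locateK.
Qed.

Theorem lemma3p2 (n : nat) :
  (forall (L R : seq word) (x : n.-tuple word),
      thompson_pair L R -> in_Sigma x -> sorted lexlt (act_tuple L R x)) /\
  (forall x y : n.-tuple word, in_Sigma x -> in_Sigma y ->
      exists L R : seq word, thompson_pair L R /\ act_tuple L R x = y).
Proof.
split=> [L R x pair_LR | x y]; last exact: act_tuple_transitive.
exact: homo_sorted (iota_lexlt_mono pair_LR) _.
Qed.
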